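(* Let $M$ be a partial multiplication matrix, and let $\pi^\#$ be an $M$-indivisible $M$-gridded permutation with more than one point. Then there is a cycle of the row-column graph $G_M$ such that every cell corresponding to an edge of this cycle is non-empty in $\pi^\#$, and the gridded subpermutation of $\pi^\#$ consisting of the last point of each of these cells is $M$-indivisible.
   Context: A gridding matrix has entries in $\{0,1,-1\}$; an $m\times n$ one has $m$ columns, $n$ rows, $M_{ij}$ in column $i$ from the left and row $j$ from the bottom. An $M$-gridding of a permutation $\pi$ of length $L$ is a choice of vertical lines $\tfrac12=v_0\le\dots\le v_m=L+\tfrac12$ and horizontal lines $\tfrac12=h_0\le\dots\le h_n=L+\tfrac12$, not through points of $\pi$, such that in each cell $C_{ij}=\{v_{i-1}<x<v_i,\ h_{j-1}<y<h_j\}$ the points of $\pi$ are absent if $M_{ij}=0$, increasing if $M_{ij}=1$, decreasing if $M_{ij}=-1$; the result is an $M$-gridded permutation. The row-column graph $G_M$ is the bipartite graph on $\{1,\dots,m\}\cup\{1',\dots,n'\}$ with edge $ij'$ iff $M_{ij}\ne0$; cell $(i,j)$ corresponds to edge $ij'$. $M$ is a partial multiplication matrix: there are fixed $c_1,\dots,c_m,r_1,\dots,r_n\in\{\pm1\}$ with $M_{ij}=c_ir_j$ for each non-zero entry. Column $i$ is oriented left-to-right if $c_i=1$, right-to-left otherwise; row $j$ bottom-to-top if $r_j=1$, top-to-bottom otherwise. The points in a non-zero cell $(i,j)$ are thereby linearly ordered (consistently with both the column and row orientations); the last point of the cell is the final one in this order. $M$-sum: for $M$-gridded $\sigma^\#,\tau^\#$,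 $\sigma^\#\boxplus\tau^\#$ is the $M$-gridded permutation whose points are those of $\sigma^\#$ and $\tau^\#$, each in the cell it occupied, with the relative order among points of $\sigma^\#$ and among points of $\tau^\#$ unchanged, and such that in every column of cells all points of $\sigma^\#$ precede all points of $\tau^\#$ in the column's orientation and in every row of cells all points of $\sigma^\#$ precede all points of $\tau^\#$ in the row's orientation. An $M$-gridded permutation is $M$-divisible if it equals $\sigma^\#\boxplus\tau^\#$ with $\sigma^\#,\tau^\#$ non-empty, and $M$-indivisible otherwise. A gridded subpermutation inherits the cells of the points it keeps. *)

From mathcomp Require Import all_boot all_order all_algebra all_fingroup.
Set Implicit Arguments. Unset Strict Implicit. Unset Printing Implicit Defensive.
Import Order.TTheory GRing.Theory Num.Theory.
Local Open Scope ring_scope.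

(* A gridding matrix with m columns and n rows: M i j is the entry in
   column i (from the left) and row j (from the bottom). *)
Definition gridding_matrix (m n : nat) (M : 'I_m -> 'I_n -> int) : Prop :=
  forall i j, M i j \in [:: 0; 1; -1].

Definition partial_mult (m n : nat) (M : 'I_m -> 'I_n -> int)
    (c : 'I_m -> int) (r : 'I_n -> int) : Prop :=
  gridding_matrix M /\
  (forall i, c i = 1 \/ c i = -1) /\ (forall j, r j = 1 \/ r j = -1) /\
  (forall i j, M i j != 0 -> M i j = c i * r j).

(* An M-gridded permutation: a permutation pi of length L (point k has
   x-coordinate k and y-coordinate pi k, 0-based) together with the cell of
   each point: column col k and row row k.  Existence of gridlines is
   equivalent to col being weakly increasing in x and row weakly increasing
   in y; each cell's content must be empty / increasing / decreasing
   according to M. *)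
Definition is_gridded (m n : nat) (M : 'I_m -> 'I_n -> int) (L : nat)
    (pi : 'S_L) (col : 'I_L -> 'I_m) (row : 'I_L -> 'I_n) : Prop :=
  (forall k k' : 'I_L, (k <= k')%N -> (col k <= col k')%N) /\
  (forall k k' : 'I_L, (pi k <= pi k')%N -> (row k <= row k')%N) /\
  (forall k, M (col k) (row k) != 0) /\
  (forall k k' : 'I_L, (k < k')%N -> col k = col k' -> row k = row k' ->
     0 < M (col k) (row k) * ((pi k')%:Z - (pi k)%:Z)).

(* For point sets S, T
   partitioning a point set P of pi#, this says exactly that the gridded
   subpermutation on P equals (pi#|S) [M-sum] (pi#|T). *)
Definition Msum_split (m n L : nat) (c : 'I_m -> int) (r : 'I_n -> int)
    (pi : 'S_L) (col : 'I_L -> 'I_m) (row : 'I_L -> 'I_n)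
    (S T : {set 'I_L}) : Prop :=
  forall a b, a \in S -> b \in T ->
    (col a = col b -> 0 < c (col a) * ((b : nat)%:Z - (a : nat)%:Z)) /\
    (row a = row b -> 0 < r (row a) * ((pi b)%:Z - (pi a)%:Z)).

Definition Mdivisible_on (m n L : nat) (c : 'I_m -> int) (r : 'I_n -> int)
    (pi : 'S_L) (col : 'I_L -> 'I_m) (row : 'I_L -> 'I_n)
    (P : {set 'I_L}) : Prop :=
  exists S : {set 'I_L}, S \subset P /\ S != set0 /\ P :\: S != set0 /\
    Msum_split c r pi col row S (P :\: S).

Definition Mindivisible_on (m n L : nat) (c : 'I_m -> int) (r : 'I_n -> int)
    (pi : 'S_L) (col : 'I_L -> 'I_m) (row : 'I_L -> 'I_n)
    (P : {set 'I_L}) : Prop :=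
  ~ Mdivisible_on c r pi col row P.

(* A cycle of the row-column graph G_M (bipartite, so of length 2t, t >= 2):
   distinct columns cs 0, ..., cs (t-1) and distinct rows rs 0, ..., rs (t-1),
   with edges cs s -- rs s' and rs s -- cs (s+1 mod t). *)
Definition GM_cycle (m n : nat) (M : 'I_m -> 'I_n -> int) (t : nat)
    (cs : 'I_t -> 'I_m) (rs : 'I_t -> 'I_n) : Prop :=
  (2 <= t)%N /\ injective cs /\ injective rs /\
  (forall s, M (cs s) (rs s) != 0 /\ M (cs (ordS s)) (rs s) != 0).

Definition cycle_cell (m n t : nat) (cs : 'I_t -> 'I_m) (rs : 'I_t -> 'I_n)
    (i : 'I_m) (j : 'I_n) : bool :=
  [exists s : 'I_t, (j == rs s) && ((i == cs s) || (i == cs (ordS s)))].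

(* k is the last point of its cell (in the orientation of its column,
   which agrees with that of its row inside a non-empty cell). *)
Definition is_last_point (m n L : nat) (c : 'I_m -> int)
    (col : 'I_L -> 'I_m) (row : 'I_L -> 'I_n) (k : 'I_L) : bool :=
  [forall k' : 'I_L, ((col k' == col k) && (row k' == row k)) ==>
     (c (col k) * ((k' : nat)%:Z - (k : nat)%:Z) <= 0)].

Definition cycle_last_points (m n L t : nat) (c : 'I_m -> int)
    (col : 'I_L -> 'I_m) (row : 'I_L -> 'I_n)
    (cs : 'I_t -> 'I_m) (rs : 'I_t -> 'I_n) : {set 'I_L} :=
  [set k | cycle_cell cs rs (col k) (row k) && is_last_point c col row k].

From mathcomp Require Import all_boot all_order all_algebra all_fingroup.
From mathcomp Require Import zify ring lra.
Import Order.TTheory GRing.Theory Num.Theory.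
Set Implicit Arguments. Unset Strict Implicit. Unset Printing Implicit Defensive.
Local Open Scope ring_scope.

(* Send a point to the last point of its row and then to the last point of
   that point's column.  This map on the finite set of points has a periodic
   orbit p_0, q_0, p_1, q_1, ..., where q_s is the last point of the row of p_s
   and p_(s+1) the last point of the column of q_s.  Indivisibility forbids a
   point that is last in both its row and its column (it alone could be split
   off at the end), so the columns and rows visited form a cycle of G_M, whose
   cells have p_s and q_s as their last points.  In an M-sum decomposition of
   these points the second summand contains, with each point, the next point
   of the orbit (which follows it in a common row or column), hence everything. *)

Section PeriodicPoint.
Variables (T : finType) (f : T -> T).

Lemma exists_periodic_point (x : T) :
  exists y (t : nat), [/\ (0 < t)%N, iter t f y = y &
                         injective (fun s : 'I_t => iter s f y)].
Proof.
have /trajectP[i lt_i_ord iter_ord] := looping_order f x.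
have period_exists : exists t, (0 < t)%N && (iter t f (iter i f x) == iter i f x).
  exists (fingraph.order f x - i)%N.
  by rewrite subn_gt0 lt_i_ord -iterD (subnK (ltnW lt_i_ord)) iter_ord eqxx.
case: (ex_minnP period_exists) => t /andP[t_gt0 /eqP yt] t_min.
exists (iter i f x), t; split=> // s s' ss'; apply/val_inj.
wlog lt_ss' : s s' ss' / (s < s')%N.
  by move=> wlog; case: (ltngtP s s') => // [/wlog|/wlog] ->.
have back_to_y : iter (t - s' + s) f (iter i f x) == iter i f x.
  by rewrite iterD ss' -iterD (subnK (ltnW (ltn_ord s'))) yt.
have := t_min (t - s' + s)%N; rewrite back_to_y andbT.
have := ltn_ord s'; lia.
Qed.

Section Periodic.
Variables (y : T) (t : nat).
Hypotheses (t_gt0 : (0 < t)%N) (yt : iter t f y = y).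

Lemma iter_mul_period j : iter (j * t) f y = y.
Proof. by elim: j => // j IHj; rewrite mulSn iterD IHj yt. Qed.

Lemma iter_mod_period k : iter (k %% t) f y = iter k f y.
Proof. by rewrite {2}(divn_eq k t) addnC iterD iter_mul_period. Qed.

Lemma periodic_orbit_closed (P : pred T) :
  (forall s, P (iter s f y) -> P (iter s.+1 f y)) ->
  forall s0 s, P (iter s0 f y) -> P (iter s f y).
Proof.
move=> Pstep s0 s Ps0.
have Pafter j : P (iter (s0 + j) f y).
  by elim: j => [|j IHj]; rewrite ?addn0 // addnS Pstep.
have le_s0 : (s0 <= s + s0 * t)%N by nia.
rewrite -(iter_mul_period s0) -iterD -(subnKC le_s0).
exact: Pafter.
Qed.

End Periodic.
End PeriodicPoint.

Section SignedOrder.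
Variable R : realDomainType.
Implicit Types s x y : R.

Lemma signed_le0_anti s x y :
  s != 0 -> s * (x - y) <= 0 -> s * (y - x) <= 0 -> x = y.
Proof.
move=> s_neq0 le_xy le_yx; apply/eqP; rewrite -subr_eq0.
have : s * (x - y) == 0 by rewrite eq_le le_xy -oppr_le0 -mulrN opprB.
by rewrite mulf_eq0 (negbTE s_neq0).
Qed.

Lemma signed_gt0_le0 s x y :
  s != 0 -> x != y -> (0 < s * (y - x)) = (s * (x - y) <= 0).
Proof.
move=> s_neq0 x_neq_y.
by rewrite -opprB mulrN oppr_gt0 lt_neqAle mulf_eq0 (negbTE s_neq0) subr_eq0 x_neq_y.
Qed.

Lemma mulr_gt0_le0 x y : 0 < x * y -> y <= 0 -> x <= 0.
Proof. by move=> ? ?; nra. Qed.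

End SignedOrder.

(* Columns and rows of cells are treated alike as lines: a column orders its
   points by x-coordinate and a row by y-coordinate, each in the orientation
   given by its sign. *)
Section LastOnLine.
Variables (R : realDomainType) (T : finType) (I : eqType).
Variables (line : T -> I) (sgn : I -> R) (pos : T -> R).

Definition last_in_line (a : T) : Prop :=
  forall k, line k = line a -> sgn (line a) * (pos k - pos a) <= 0.

Definition line_last (a : T) : T :=
  Order.arg_max a (fun k => line k == line a) (fun k => sgn (line a) * pos k).

Lemma line_line_last a : line (line_last a) = line a.
Proof. by rewrite /line_last; case: arg_maxP => // k /eqP. Qed.

Lemma last_in_line_last a : last_in_line (line_last a).
Proof.
rewrite /last_in_line line_line_last /line_last.
case: arg_maxP => //= b _ b_max k /eqP/b_max.
by rewrite mulrBr subr_le0.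
Qed.

Definition line_split (S U : {set T}) : Prop :=
  forall a b, a \in S -> b \in U -> line a = line b ->
    0 < sgn (line a) * (pos b - pos a).

Lemma line_split_last S U a b :
  line_split S U -> a \in U -> last_in_line b -> line a = line b -> b \notin S.
Proof.
move=> split_SU aU b_last ab; apply/negP => bS.
by have := split_SU b a bS aU (esym ab); rewrite ltNge b_last.
Qed.

Hypotheses (sgn_neq0 : forall i, sgn i != 0) (pos_inj : injective pos).

Lemma last_in_line_inj a b :
  last_in_line a -> last_in_line b -> line a = line b -> a = b.
Proof.
move=> a_last b_last ab; apply: pos_inj.
by apply: (signed_le0_anti (sgn_neq0 (line a))); [rewrite ab; apply: b_last | apply: a_last].
Qed.

Lemma last_in_line_after a b :
  last_in_line b -> line a = line b -> a != b -> 0 < sgn (line a) * (pos b - pos a).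
Proof.
move=> b_last ab a_neq_b; rewrite signed_gt0_le0 //; first by rewrite ab; apply: b_last.
by apply: contra_neq a_neq_b => /pos_inj.
Qed.

End LastOnLine.

Section GriddedPermutation.
Variables (m n : nat) (M : 'I_m -> 'I_n -> int) (c : 'I_m -> int) (r : 'I_n -> int).
Variables (L : nat) (pi : 'S_L) (col : 'I_L -> 'I_m) (row : 'I_L -> 'I_n).
Hypotheses (pmM : partial_mult M c r) (grid : is_gridded M pi col row).

Local Notation colpos := (fun k : 'I_L => (k : nat)%:Z).
Local Notation rowpos := (fun k : 'I_L => (pi k : nat)%:Z).
Local Notation last_in_col := (last_in_line col c colpos).
Local Notation last_in_row := (last_in_line row r rowpos).
Local Notation col_last := (line_last col c colpos).
Local Notation row_last := (line_last row r rowpos).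
Local Notation last_point := (is_last_point c col row).

Let c_neq0 i : c i != 0.
Proof. by have [_ [c_pm1 _]] := pmM; case: (c_pm1 i) => ->. Qed.

Let r_neq0 j : r j != 0.
Proof. by have [_ [_ [r_pm1 _]]] := pmM; case: (r_pm1 j) => ->. Qed.

Let colpos_inj : injective colpos.
Proof. by move=> a b [] /val_inj. Qed.

Let rowpos_inj : injective rowpos.
Proof. by move=> a b [] /val_inj /perm_inj. Qed.

Lemma cell_orientations_agree a k :
  col k = col a -> row k = row a -> k != a ->
  0 < c (col a) * ((k : nat)%:Z - (a : nat)%:Z) *
      (r (row a) * ((pi k : nat)%:Z - (pi a : nat)%:Z)).
Proof.
move=> ka_col ka_row k_neq_a; have [_ [_ [_ M_cr]]] := pmM.
have [_ [_ [M_neq0 cell_monotone]]] := grid.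
have M_a : M (col a) (row a) = c (col a) * r (row a) by rewrite M_cr ?M_neq0.
case: (ltngtP a k) => [lt_ak | lt_ka | /val_inj eq_ak].
- have := cell_monotone a k lt_ak (esym ka_col) (esym ka_row); rewrite M_a => incr.
  rewrite (_ : _ * _ = ((k : nat)%:Z - (a : nat)%:Z) *
    (c (col a) * r (row a) * ((pi k : nat)%:Z - (pi a : nat)%:Z))); last by ring.
  by rewrite mulr_gt0 // subr_gt0 ltz_nat.
- have := cell_monotone k a lt_ka ka_col ka_row; rewrite ka_col ka_row M_a => incr.
  rewrite (_ : _ * _ = ((a : nat)%:Z - (k : nat)%:Z) *
    (c (col a) * r (row a) * ((pi a : nat)%:Z - (pi k : nat)%:Z))); last by ring.
  by rewrite mulr_gt0 // subr_gt0 ltz_nat.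
- by rewrite eq_ak eqxx in k_neq_a.
Qed.

Lemma last_in_col_last_point a : last_in_col a -> last_point a.
Proof. by move=> a_last; apply/forallP => k; apply/implyP => /andP[/eqP/a_last]. Qed.

Lemma last_in_row_last_point a : last_in_row a -> last_point a.
Proof.
move=> a_last; apply/forallP => k; apply/implyP => /andP[/eqP ka_col /eqP ka_row].
have [-> | k_neq_a] := eqVneq k a; first by rewrite subrr mulr0.
exact: mulr_gt0_le0 (cell_orientations_agree ka_col ka_row k_neq_a) (a_last k ka_row).
Qed.

Lemma last_point_inj a b :
  last_point a -> last_point b -> col a = col b -> row a = row b -> a = b.
Proof.
move=> /forallP a_last /forallP b_last ab_col ab_row; apply: colpos_inj.
apply: (signed_le0_anti (c_neq0 (col a))).
- by rewrite ab_col; apply: (implyP (b_last a)); rewrite ab_col ab_row !eqxx.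
- by apply: (implyP (a_last b)); rewrite ab_col ab_row !eqxx.
Qed.

Lemma Msum_splitP S U :
  Msum_split c r pi col row S U <->
  line_split col c colpos S U /\ line_split row r rowpos S U.
Proof.
split=> [split_SU | [col_split row_split] a b aS bU].
  by split=> a b aS bU; have [] := split_SU a b aS bU.
by split; [apply: col_split | apply: row_split].
Qed.

Definition corner_step : 'I_L -> 'I_L := col_last \o row_last.

Definition corner (x : 'I_L) (s : nat) : 'I_L := iter s corner_step x.

Definition corner_cols (x : 'I_L) (t : nat) (s : 'I_t) : 'I_m := col (corner x s).

Definition corner_rows (x : 'I_L) (t : nat) (s : 'I_t) : 'I_n := row (corner x s).

Section Indivisible.
Hypotheses (L_gt1 : (1 < L)%N) (indiv : Mindivisible_on c r pi col row [set: 'I_L]).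

Lemma not_last_in_col_and_row a : last_in_col a -> last_in_row a -> False.
Proof.
move=> a_col a_row; apply: indiv; exists [set~ a]; rewrite setTD setCK.
split; [exact: subsetT | split; [|split]].
- by rewrite -cards_eq0 cardsC1 card_ord; lia.
- by apply/set0Pn; exists a; rewrite inE.
apply/Msum_splitP; split=> k b; rewrite !inE => k_neq_a /eqP -> k_line.
- exact: last_in_line_after c_neq0 colpos_inj _ _ a_col k_line k_neq_a.
- exact: last_in_line_after r_neq0 rowpos_inj _ _ a_row k_line k_neq_a.
Qed.

Section CornerCycle.
Variables (x : 'I_L) (t : nat).
Hypotheses (t_gt0 : (0 < t)%N) (xt : corner x t = x)
           (corner_inj : injective (fun s : 'I_t => corner x s)).

Local Notation p := (corner x).
Local Notation q s := (row_last (corner x s)).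
Local Notation cs := (@corner_cols x t).
Local Notation rs := (@corner_rows x t).

Lemma corner_succ s : p s.+1 = col_last (q s).
Proof. exact: iterS. Qed.

Lemma corner_mod s : p (s %% t) = p s.
Proof. exact: iter_mod_period. Qed.

Lemma corner_ordS (s : 'I_t) : p (ordS s) = p s.+1.
Proof. exact: corner_mod. Qed.

Lemma corner_last_in_col s : last_in_col (p s).
Proof.
rewrite -corner_mod -modnDr corner_mod -(prednK (ltn_addl s t_gt0)) corner_succ.
exact: last_in_line_last.
Qed.

Lemma row_row_last_corner s : row (q s) = row (p s).
Proof. exact: line_line_last. Qed.

Lemma col_row_last_corner s : col (q s) = col (p s.+1).
Proof. by rewrite corner_succ line_line_last. Qed.

Lemma corner_last_point s : last_point (p s).
Proof. exact/last_in_col_last_point/corner_last_in_col. Qed.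

Lemma row_last_corner_last_point s : last_point (q s).
Proof. exact/last_in_row_last_point/last_in_line_last. Qed.

Lemma corner_neq_row_last s : p s != q s.
Proof.
apply/eqP => pq; apply: (@not_last_in_col_and_row (p s)); first exact: corner_last_in_col.
by rewrite pq; apply: last_in_line_last.
Qed.

Lemma two_le_period : (2 <= t)%N.
Proof.
rewrite ltnNge; apply/negP => t_le1.
have p1 : p 1 = p 0.
  have t1 : t = 1%N by apply/eqP; rewrite eqn_leq t_le1.
  by rewrite -t1 xt.
apply: (negP (corner_neq_row_last 0)); apply/eqP/last_point_inj.
- exact: corner_last_point.
- exact: row_last_corner_last_point.
- by rewrite col_row_last_corner p1.
- by rewrite row_row_last_corner.
Qed.

Lemma corner_cols_inj : injective cs.
Proof.
move=> s s' ss'; apply/corner_inj/(last_in_line_inj c_neq0 colpos_inj _ _ ss');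
  exact: corner_last_in_col.
Qed.

Lemma corner_rows_inj : injective rs.
Proof.
move=> s s' ss'; apply/ordS_inj/corner_inj; rewrite /= !corner_ordS !corner_succ.
congr col_last; apply: (last_in_line_inj r_neq0 rowpos_inj).
- exact: last_in_line_last.
- exact: last_in_line_last.
- by rewrite !row_row_last_corner.
Qed.

Lemma corner_GM_cycle : GM_cycle M cs rs.
Proof.
have [_ [_ [M_neq0 _]]] := grid.
split; [exact: two_le_period | split; [exact: corner_cols_inj | split]].
  exact: corner_rows_inj.
move=> s; split; first exact: M_neq0.
rewrite /corner_cols /corner_rows corner_ordS -col_row_last_corner -row_row_last_corner.
exact: M_neq0.
Qed.

Lemma corner_cycle_cell s : cycle_cell cs rs (col (p s)) (row (p s)).
Proof.
apply/existsP; exists (Ordinal (ltn_pmod s t_gt0)).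
by rewrite /corner_cols /corner_rows /= corner_mod !eqxx.
Qed.

Lemma row_last_corner_cycle_cell s : cycle_cell cs rs (col (q s)) (row (q s)).
Proof.
apply/existsP; exists (Ordinal (ltn_pmod s t_gt0)).
rewrite row_row_last_corner col_row_last_corner /corner_cols /corner_rows corner_ordS /=.
by rewrite corner_mod !eqxx orbT.
Qed.

Lemma corner_cells_nonempty i j :
  cycle_cell cs rs i j -> exists k, col k = i /\ row k = j.
Proof.
case/existsP=> s /andP[/eqP -> /orP[/eqP -> | /eqP ->]]; first by exists (p s).
exists (q s).
by rewrite /corner_cols /corner_rows corner_ordS -col_row_last_corner row_row_last_corner.
Qed.

Lemma mem_cycle_last_points k :
  k \in cycle_last_points c col row cs rs <-> exists s, k = p s \/ k = q s.
Proof.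
rewrite inE; split.
  case/andP=> /existsP[s /andP[/eqP k_row /orP[/eqP k_col | /eqP k_col]]] k_last.
    by exists s; left; apply: last_point_inj k_last (corner_last_point s) k_col k_row.
  exists s; right; apply: last_point_inj k_last (row_last_corner_last_point s) _ _.
    by rewrite k_col /corner_cols corner_ordS col_row_last_corner.
  by rewrite k_row row_row_last_corner.
case=> s [-> | ->].
- by rewrite corner_cycle_cell corner_last_point.
- by rewrite row_last_corner_cycle_cell row_last_corner_last_point.
Qed.

Lemma cycle_last_points_indivisible :
  Mindivisible_on c r pi col row (cycle_last_points c col row cs rs).
Proof.
set P := cycle_last_points _ _ _ _ _.
case=> S [SP [S_neq0 [U_neq0 /Msum_splitP[col_split row_split]]]].
set U := P :\: S in U_neq0 col_split row_split.
have p_in_P s : p s \in P by apply/mem_cycle_last_points; exists s; left.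
have q_in_P s : q s \in P by apply/mem_cycle_last_points; exists s; right.
have in_U a : a \in P -> a \notin S -> a \in U by move=> aP naS; apply/setDP.
have p_to_q s : p s \in U -> q s \in U.
  move=> pU; apply: in_U (q_in_P s) _.
  apply: (line_split_last row_split pU); first exact: last_in_line_last.
  by rewrite row_row_last_corner.
have q_to_p s : q s \in U -> p s.+1 \in U.
  move=> qU; apply: in_U (p_in_P s.+1) _.
  apply: (line_split_last col_split qU); first exact: corner_last_in_col.
  exact: col_row_last_corner.
have [s0 p_s0_U] : exists s0, p s0 \in U.
  case/set0Pn: U_neq0 => a aU.
  have /mem_cycle_last_points[s [a_p | a_q]] : a \in P by case/setDP: aU.
  - by exists s; rewrite -a_p.
  - by exists s.+1; apply: q_to_p; rewrite -a_q.
have p_U s : p s \in U.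
  by apply: (periodic_orbit_closed t_gt0 xt (P := mem U)) p_s0_U => s' /p_to_q/q_to_p.
case/set0Pn: S_neq0 => a aS.
have /mem_cycle_last_points[s [a_p | a_q]] := subsetP SP a aS.
- by have := p_U s; rewrite -a_p inE aS.
- by have := p_to_q s (p_U s); rewrite -a_q inE aS.
Qed.

End CornerCycle.

End Indivisible.

End GriddedPermutation.

Theorem lemma3p7 (m n : nat) (M : 'I_m -> 'I_n -> int)
    (c : 'I_m -> int) (r : 'I_n -> int)
    (L : nat) (pi : 'S_L) (col : 'I_L -> 'I_m) (row : 'I_L -> 'I_n) :
  partial_mult M c r ->
  is_gridded M pi col row ->
  (1 < L)%N ->
  Mindivisible_on c r pi col row [set: 'I_L] ->
  exists (t : nat) (cs : 'I_t -> 'I_m) (rs : 'I_t -> 'I_n),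
    GM_cycle M cs rs /\
    (forall i j, cycle_cell cs rs i j ->
       exists k : 'I_L, col k = i /\ row k = j) /\
    Mindivisible_on c r pi col row (cycle_last_points c col row cs rs).
Proof.
move=> pmM grid L_gt1 indiv.
have [x [t [t_gt0 xt corner_inj]]] :=
  exists_periodic_point (corner_step c r pi col row) (Ordinal (ltnW L_gt1)).
exists t, (corner_cols c r pi col row x (t := t)), (corner_rows c r pi col row x (t := t)).
split; [|split].
- exact: (corner_GM_cycle pmM grid L_gt1 indiv t_gt0 xt corner_inj).
- exact: (corner_cells_nonempty xt).
- exact: (cycle_last_points_indivisible pmM grid t_gt0 xt).
Qed.
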